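(* Let $H\ge 1$ be an integer and let $n_0,n_1,\dots,n_H$ be positive integers with $n_0=d$ and $n_H=1$ (the layer widths of a fully-connected feed-forward network with $d$ inputs, depth $H$ and a single output). Define the mass $\Psi=\prod_{i=0}^{H} n_i$, the quantity $\Lambda=\sqrt[H]{\Psi}$, and the size $N=\sum_{i=0}^{H-1} n_i n_{i+1}$. Then \[ \Psi^2 H=\Lambda^{2H}H\;\ge\; N\;\ge\; \sqrt[H]{\Psi^2}\,\frac{H}{\sqrt[H]{d}}\;\ge\;\sqrt[H]{\Psi}=\Lambda . \]
   Context: The network has layers $0,1,\dots,H$, where layer $i$ has $n_i$ units, layer $0$ is the input layer and layer $H$ is the output layer; consecutive layers are fully connected, so $N$ is the total number of weights and $\Psi$ is the total number of input-to-output paths. *)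

From Stdlib Require Import Reals Lra Lia Arith.
Open Scope R_scope.

Fixpoint prod_upto (n : nat -> nat) (k : nat) : nat :=
  match k with
  | O => n O
  | S k' => (prod_upto n k' * n (S k'))%nat
  end.

Fixpoint sum_below (f : nat -> nat) (k : nat) : nat :=
  match k with
  | O => O
  | S k' => (sum_below f k' + f k')%nat
  end.

Definition mass (H : nat) (n : nat -> nat) : nat := prod_upto n H.

Definition net_size (H : nat) (n : nat -> nat) : nat :=
  sum_below (fun i => (n i * n (S i))%nat) H.

Definition hroot (H : nat) (x : R) : R := Rpower x (/ INR H).

(** Each layer product [n_i n_(i+1)] is a factor of [Psi^2], so [N <= H Psi <= H Psi^2].
    Conversely, the [H] products [n_i n_(i+1)] multiply to [Psi^2 / (n_0 n_H) = Psi^2 / d]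
    (every width except the outer two occurs twice), so AM-GM gives
    [(N / H)^H >= Psi^2 / d], i.e. [N >= H Psi^(2/H) / d^(1/H)]; the last bound follows from
    [d <= Psi] and [H >= 1]. *)
From Stdlib Require Import Reals Lra Lia Arith.
Open Scope R_scope.

Fixpoint rsum (f : nat -> R) (k : nat) : R :=
  match k with O => 0 | S k' => rsum f k' + f k' end.

Lemma INR_sum_below (g : nat -> nat) (k : nat) :
  INR (sum_below g k) = rsum (fun i => INR (g i)) k.
Proof. induction k as [|k IH]; simpl; [reflexivity|]. rewrite plus_INR, IH; reflexivity. Qed.

Lemma rsum_ext (f g : nat -> R) (k : nat) :
  (forall i, (i < k)%nat -> f i = g i) -> rsum f k = rsum g k.
Proof.
  induction k as [|k IH]; intros hfg; simpl; [reflexivity|].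
  rewrite IH, hfg; [reflexivity | lia | intros i hi; apply hfg; lia].
Qed.

Lemma rsum_plus (f g : nat -> R) (k : nat) :
  rsum (fun i => f i + g i) k = rsum f k + rsum g k.
Proof. induction k as [|k IH]; simpl; [lra|]. rewrite IH; lra. Qed.

Lemma rsum_shift (f : nat -> R) (k : nat) :
  rsum (fun i => f (S i)) k + f O = rsum f (S k).
Proof. induction k as [|k IH]; simpl in *; lra. Qed.

Lemma rsum_le_const (f : nat -> R) (M : R) (k : nat) :
  (forall i, (i < k)%nat -> f i <= M) -> rsum f k <= INR k * M.
Proof.
  induction k as [|k IH]; intros hf; simpl rsum; [simpl; lra|].
  rewrite S_INR. specialize (IH (fun i hi => hf i ltac:(lia))).
  specialize (hf k ltac:(lia)). lra.
Qed.

Lemma rsum_pos (f : nat -> R) (k : nat) :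
  (1 <= k)%nat -> (forall i, (i < k)%nat -> 0 < f i) -> 0 < rsum f k.
Proof.
  induction k as [|k IH]; intros hk hf; [lia|]. simpl rsum.
  specialize (hf k ltac:(lia)) as hfk.
  destruct k as [|k]; [simpl; lra|].
  specialize (IH ltac:(lia) (fun i hi => hf i ltac:(lia))). lra.
Qed.

Lemma ln_le_sub_1 (y : R) : 0 < y -> ln y <= y - 1.
Proof.
  intros hy. destruct (Rle_or_lt (ln y) (y - 1)) as [h|h]; [exact h|].
  apply exp_increasing in h. rewrite exp_ln in h by exact hy.
  pose proof (exp_ineq1_le (y - 1)). lra.
Qed.

Lemma ln_le_inv (x y : R) : 0 < x -> 0 < y -> ln x <= ln y -> x <= y.
Proof.
  intros hx hy hxy. destruct (Rle_or_lt x y) as [h|h]; [exact h|].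
  pose proof (ln_increasing y x hy h). lra.
Qed.

(* Summing the tangent-line bound [ln (f i / A) <= f i / A - 1]. *)
Lemma rsum_ln_le_tangent (f : nat -> R) (A : R) (k : nat) : 0 < A ->
  (forall i, (i < k)%nat -> 0 < f i) ->
  rsum (fun i => ln (f i)) k <= INR k * (ln A - 1) + rsum f k / A.
Proof.
  intros hA. induction k as [|k IH]; intros hf; simpl rsum.
  - simpl. unfold Rdiv. lra.
  - rewrite S_INR. specialize (IH (fun i hi => hf i ltac:(lia))).
    assert (hfk : 0 < f k) by (apply hf; lia).
    pose proof (ln_le_sub_1 (f k / A) ltac:(apply Rdiv_lt_0_compat; assumption)) as ht.
    unfold Rdiv in *. rewrite ln_mult, ln_Rinv in ht by (auto using Rinv_0_lt_compat).
    lra.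
Qed.

Lemma rsum_ln_le_amgm (f : nat -> R) (k : nat) : (1 <= k)%nat ->
  (forall i, (i < k)%nat -> 0 < f i) ->
  rsum (fun i => ln (f i)) k <= INR k * ln (rsum f k / INR k).
Proof.
  intros hk hf.
  assert (hK : 0 < INR k) by (apply lt_0_INR; lia).
  pose proof (rsum_pos f k hk hf) as hS.
  pose proof (rsum_ln_le_tangent f (rsum f k / INR k) k
                (Rdiv_lt_0_compat _ _ hS hK) hf) as ht.
  replace (rsum f k / (rsum f k / INR k)) with (INR k) in ht by (field; lra).
  lra.
Qed.

Section Hroot.
Variable H : nat.
Hypothesis hH : (1 <= H)%nat.

Let hHpos : 0 < INR H.
Proof. apply lt_0_INR; lia. Qed.

Lemma hroot_pos (x : R) : 0 < hroot H x.
Proof. apply exp_pos. Qed.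

Lemma hroot_pow_mul (x : R) (m : nat) : 0 < x -> hroot H x ^ (m * H) = x ^ m.
Proof.
  intros hx. unfold hroot.
  rewrite <- Rpower_pow by apply exp_pos.
  rewrite Rpower_mult, mult_INR.
  replace (/ INR H * (INR m * INR H)) with (INR m) by (field; lra).
  apply Rpower_pow, hx.
Qed.

Lemma hroot_pow (x : R) : 0 < x -> hroot H (x ^ H) = x.
Proof.
  intros hx. unfold hroot.
  rewrite <- Rpower_pow, Rpower_mult by exact hx.
  rewrite Rinv_r by lra. apply Rpower_1, hx.
Qed.

Lemma hroot_mul (x y : R) : 0 < x -> 0 < y -> hroot H (x * y) = hroot H x * hroot H y.
Proof. intros hx hy. unfold hroot. rewrite Rpower_mult_distr; auto. Qed.

Lemma hroot_le (x y : R) : 0 < x <= y -> hroot H x <= hroot H y.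
Proof. intros hxy. apply Rle_Rpower_l; [left; apply Rinv_0_lt_compat, hHpos|exact hxy]. Qed.

Lemma hroot_le_mul_pow (x y z : R) : 0 < x -> 0 < y -> 0 < z ->
  x <= z * y ^ H -> hroot H x <= hroot H z * y.
Proof.
  intros hx hy hz hxy.
  rewrite <- (hroot_pow y hy), <- hroot_mul by (try apply pow_lt; assumption).
  apply hroot_le. split; assumption.
Qed.

End Hroot.

Section Widths.
Variable H : nat.
Variable n : nat -> nat.
Hypothesis hpos : forall i, (i <= H)%nat -> (0 < n i)%nat.

Lemma prod_upto_pos (k : nat) : (k <= H)%nat -> (0 < prod_upto n k)%nat.
Proof.
  induction k as [|k IH]; intros hk; simpl; [apply hpos; lia|].
  specialize (IH ltac:(lia)). specialize (hpos (S k) hk). nia.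
Qed.

Lemma prod_upto_le (j k : nat) :
  (j <= k)%nat -> (k <= H)%nat -> (prod_upto n j <= prod_upto n k)%nat.
Proof.
  induction k as [|k IH]; intros hjk hk; [replace j with O by lia; lia|].
  destruct (Nat.eq_dec j (S k)) as [->|hj]; [lia|]. simpl.
  specialize (IH ltac:(lia) ltac:(lia)). specialize (hpos (S k) hk). nia.
Qed.

Lemma width_le_prod_upto (i : nat) : (i <= H)%nat -> (n i <= prod_upto n i)%nat.
Proof.
  destruct i as [|i]; intros hi; simpl; [lia|].
  pose proof (prod_upto_pos i ltac:(lia)). nia.
Qed.

Lemma width_le_mass (i : nat) : (i <= H)%nat -> (n i <= mass H n)%nat.
Proof.
  intros hi. apply Nat.le_trans with (prod_upto n i);
    [apply width_le_prod_upto | apply prod_upto_le]; lia.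
Qed.

Lemma consecutive_le_mass (i : nat) : (i < H)%nat -> (n i * n (S i) <= mass H n)%nat.
Proof.
  intros hi. apply Nat.le_trans with (prod_upto n (S i)).
  - simpl. pose proof (width_le_prod_upto i ltac:(lia)). nia.
  - apply prod_upto_le; lia.
Qed.

Lemma net_size_le_mass : INR (net_size H n) <= INR H * INR (mass H n).
Proof.
  unfold net_size. rewrite INR_sum_below.
  apply rsum_le_const. intros i hi. apply le_INR, consecutive_le_mass, hi.
Qed.

Lemma net_size_pos : (1 <= H)%nat -> 0 < INR (net_size H n).
Proof.
  intros hH. unfold net_size. rewrite INR_sum_below. apply rsum_pos; [exact hH|].
  intros i hi. apply lt_0_INR.
  pose proof (hpos i ltac:(lia)). pose proof (hpos (S i) ltac:(lia)). nia.
Qed.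

Lemma ln_prod_upto (k : nat) : (k <= H)%nat ->
  ln (INR (prod_upto n k)) = rsum (fun i => ln (INR (n i))) (S k).
Proof.
  induction k as [|k IH]; intros hk; simpl; [lra|].
  rewrite mult_INR, ln_mult, IH by (lia || apply lt_0_INR;
    solve [apply prod_upto_pos; lia | apply hpos; lia]).
  reflexivity.
Qed.

(* Every width other than [n 0] and [n H] occurs in two consecutive products. *)
Lemma ln_mass_sq :
  ln (INR (mass H n) ^ 2) = ln (INR (n O)) + ln (INR (n H))
                            + rsum (fun i => ln (INR (n i * n (S i)))) H.
Proof.
  assert (hw : forall i, (i <= H)%nat -> 0 < INR (n i)) by (intros; apply lt_0_INR, hpos; lia).
  rewrite (rsum_ext _ (fun i => ln (INR (n i)) + ln (INR (n (S i))))).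
  - rewrite rsum_plus.
    pose proof (rsum_shift (fun i => ln (INR (n i))) H) as hshift.
    unfold mass. rewrite ln_pow, ln_prod_upto by (auto; apply lt_0_INR, prod_upto_pos; lia).
    simpl rsum in *. simpl INR. lra.
  - intros i hi. rewrite mult_INR, ln_mult by (apply hw; lia). reflexivity.
Qed.

Lemma mass_sq_le_amgm : (1 <= H)%nat ->
  INR (mass H n) ^ 2 <= INR (n O) * INR (n H) * (INR (net_size H n) / INR H) ^ H.
Proof.
  intros hH.
  assert (hw : forall i, (i <= H)%nat -> 0 < INR (n i)) by (intros; apply lt_0_INR, hpos; lia).
  assert (hprod : forall i, (i < H)%nat -> 0 < INR (n i * n (S i))).
  { intros i hi. rewrite mult_INR. apply Rmult_lt_0_compat; apply hw; lia. }
  pose proof (rsum_ln_le_amgm _ H hH hprod) as hamgm.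
  assert (hmean : 0 < INR (net_size H n) / INR H).
  { apply Rdiv_lt_0_compat; [apply net_size_pos, hH | apply lt_0_INR; lia]. }
  apply ln_le_inv.
  - apply pow_lt, lt_0_INR, prod_upto_pos; lia.
  - apply Rmult_lt_0_compat; [apply Rmult_lt_0_compat; apply hw; lia | apply pow_lt, hmean].
  - rewrite ln_mass_sq, !ln_mult, ln_pow
      by (auto using pow_lt, Rmult_lt_0_compat with arith).
    unfold net_size in *. rewrite INR_sum_below. lra.
Qed.

End Widths.

Theorem theorem3p1 (H d : nat) (n : nat -> nat)
  (hH : (1 <= H)%nat)
  (hpos : forall i : nat, (i <= H)%nat -> (0 < n i)%nat)
  (h0 : n 0%nat = d) (hout : n H = 1%nat) :
  let Psi := INR (mass H n) in
  let Lam := hroot H Psi in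
  let N := INR (net_size H n) in
  Psi ^ 2 * INR H = Lam ^ (2 * H) * INR H /\
  Lam ^ (2 * H) * INR H >= N /\
  N >= hroot H (Psi ^ 2) * (INR H / hroot H (INR d)) /\
  hroot H (Psi ^ 2) * (INR H / hroot H (INR d)) >= hroot H Psi /\
  hroot H Psi = Lam.
Proof.
  intros Psi Lam N.
  assert (hHr : 1 <= INR H) by (apply (le_INR 1), hH).
  assert (hPsi : 1 <= Psi) by (apply (le_INR 1), (prod_upto_pos H n hpos); lia).
  assert (hd : 1 <= INR d) by (subst d; apply (le_INR 1), hpos; lia).
  assert (hdPsi : INR d <= Psi) by (subst d; apply le_INR, (width_le_mass H n hpos); lia).
  assert (hLam : Lam ^ (2 * H) = Psi ^ 2) by (apply (hroot_pow_mul H hH); lra).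
  assert (hsq : hroot H (Psi ^ 2) = Lam * Lam)
    by (unfold Lam; rewrite <- hroot_mul by lra; f_equal; ring).
  assert (hrd : 0 < hroot H (INR d) <= Lam) by (split; [apply hroot_pos | apply (hroot_le H hH); lra]).
  assert (hmean : hroot H (Psi ^ 2) <= hroot H (INR d) * (N / INR H)).
  { apply (hroot_le_mul_pow H hH); try apply pow_lt; try lra.
    - apply Rdiv_lt_0_compat; [apply (net_size_pos H n hpos hH) | lra].
    - replace (INR d) with (INR (n O) * INR (n H)) by (rewrite h0, hout; simpl; ring).
      apply (mass_sq_le_amgm H n hpos hH). }
  assert (hN : N <= INR H * Psi) by apply (net_size_le_mass H n hpos).
  set (r := hroot H (INR d)) in *.
  split; [rewrite hLam; reflexivity|].
  split.
  { rewrite hLam. assert (INR H * Psi <= INR H * Psi ^ 2) by (apply Rmult_le_compat_l; nra).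
    lra. }
  split; [|split; [|reflexivity]]; apply Rle_ge.
  - replace N with (r * (N / INR H) * (INR H / r)) by (field; lra).
    apply Rmult_le_compat_r; [apply Rle_mult_inv_pos|]; lra.
  - rewrite hsq. change (hroot H Psi) with Lam.
    replace (Lam * Lam * (INR H / r)) with (Lam + Lam * (INR H * Lam - r) / r) by (field; lra).
    assert (0 <= Lam * (INR H * Lam - r) / r) by (apply Rle_mult_inv_pos; nra).
    lra.
Qed.
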